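(* Let $N\ge 2$ be an integer and $\kappa,m>0$. For every fixed $k_1\in\mathbb{Z}\cap(0,N)$, $$\sum_{\substack{k_2,k_3,k_4\in\mathbb{Z}\cap(0,N)\\ k_1-k_2+k_3+k_4\equiv 0\ (\mathrm{mod}\ N)}}\big|A^{(2)}_{1,2,3,4}\big|^2\le C\,N^2\log N,$$ with $C>0$ depending only on $\kappa,m$.
   Context: For an integer $N\ge 2$ and constants $\kappa,m>0$, define for $k\in\mathbb{Z}$ the frequency $\omega_k=2\sqrt{\kappa/m}\,\big|\sin(\pi k/N)\big|$ and the $2N$-periodic sign function $\iota(x)=\operatorname{sgn}\sin(\pi x/N)$. For integers $k_1,k_2,k_3,k_4$ set $$T_{1,-2,3,4}=-\frac{3}{4\kappa^2}\,\iota(-k_2+k_3+k_4)\,\iota(-k_2)\,\iota(k_3)\,\iota(k_4)\prod_{i=1}^4\sqrt{\omega_{k_i}},\qquad A^{(2)}_{1,2,3,4}=-\frac{T_{1,-2,3,4}}{\omega_{k_1}-\omega_{k_2}+\omega_{k_3}+\omega_{k_4}}.$$ On the summation range (all $k_i\in\mathbb{Z}\cap(0,N)$, $k_1-k_2+k_3+k_4\equiv 0$ mod $N$) the denominator does not vanish. *)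

From Stdlib Require Import Reals Lra Lia ZArith.
Open Scope R_scope.

Definition Rsgn (x : R) : R :=
  if Rlt_dec 0 x then 1 else if Rlt_dec x 0 then -1 else 0.

Definition omega (kappa m : R) (N : nat) (k : Z) : R :=
  2 * sqrt (kappa / m) * Rabs (sin (PI * IZR k / INR N)).

Definition iota (N : nat) (x : Z) : R := Rsgn (sin (PI * IZR x / INR N)).

Definition T_coef (kappa m : R) (N : nat) (k1 k2 k3 k4 : Z) : R :=
  - (3 / (4 * kappa ^ 2)) *
    iota N (- k2 + k3 + k4) * iota N (- k2) * iota N k3 * iota N k4 *
    (sqrt (omega kappa m N k1) * sqrt (omega kappa m N k2) *
     sqrt (omega kappa m N k3) * sqrt (omega kappa m N k4)).

Definition A2 (kappa m : R) (N : nat) (k1 k2 k3 k4 : Z) : R :=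
  - T_coef kappa m N k1 k2 k3 k4 /
    (omega kappa m N k1 - omega kappa m N k2 + omega kappa m N k3 + omega kappa m N k4).

(* Sum over k2,k3,k4 in {1,...,N-1} with k1 - k2 + k3 + k4 = 0 mod N
   of |A2|^2.  sum_f_R0 f (N-2) sums indices 0..N-2, shifted by 1. *)
Definition resonance_sum (kappa m : R) (N : nat) (k1 : Z) : R :=
  sum_f_R0 (fun i2 =>
    sum_f_R0 (fun i3 =>
      sum_f_R0 (fun i4 =>
        let k2 := Z.of_nat (S i2) in
        let k3 := Z.of_nat (S i3) in
        let k4 := Z.of_nat (S i4) in
        if Z.eqb ((k1 - k2 + k3 + k4) mod Z.of_nat N)%Z 0%Z
        then (Rabs (A2 kappa m N k1 k2 k3 k4)) ^ 2
        else 0) (N - 2)) (N - 2)) (N - 2).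

(* Write theta_k = PI k / N, so that omega_k is a multiple of sin theta_k.  On
   resonant quadruples |sin theta_2| = |sin (theta_1 + theta_3 + theta_4)|, and the
   elementary inequality
     (a + u)(u + v)(a + v) <= 8 (a + u + v - |sin (x + y + z)|)
   for the sines a, u, v of x, y, z bounds the denominator of A2 from below; this
   gives |A2|^2 <= K / (sin theta_3 + sin theta_4)^2.  Since sin theta_k is at least
   of order min(k, N - k) / N, the right-hand side is O(N^2 / (p + q)^2), where p, q
   are the distances of k_3, k_4 to {0, N}.  For fixed k_1, k_3, k_4 at most one k_2
   is resonant, and sum_{p,q} 1/(p+q)^2 <= sum_p 1/p = O(log N). *)

From Stdlib Require Import Reals Lra Lia Psatz ZArith.
Open Scope R_scope.

Lemma Rabs_sin_plus_le x y :
  Rabs (sin (x + y)) <= Rabs (sin x) * Rabs (cos y) + Rabs (cos x) * Rabs (sin y).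
Proof. rewrite sin_plus, <- !Rabs_mult. apply Rabs_triang. Qed.

Lemma Rabs_cos_le_1 x : Rabs (cos x) <= 1.
Proof. apply Rabs_le, COS_bound. Qed.

Lemma sin_sq_half_le_1_minus_Rabs_cos x : sin x ^ 2 / 2 <= 1 - Rabs (cos x).
Proof.
  pose proof (sin2_cos2 x) as H; unfold Rsqr in H.
  pose proof (pow2_abs (cos x)).
  pose proof (Rabs_cos_le_1 x); pose proof (Rabs_pos (cos x)).
  nra.
Qed.

Lemma Rabs_sin_add3_le x y z : 0 <= sin x -> 0 <= sin y -> 0 <= sin z ->
  Rabs (sin (x + y + z)) <= sin x + sin y * Rabs (cos z) + sin z * Rabs (cos y).
Proof.
  intros hx hy hz.
  replace (x + y + z) with (x + (y + z)) by ring.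
  pose proof (Rabs_sin_plus_le x (y + z)) as Hx.
  pose proof (Rabs_sin_plus_le y z) as Hyz.
  rewrite (Rabs_right (sin x)) in Hx by lra.
  rewrite (Rabs_right (sin y)), (Rabs_right (sin z)) in Hyz by lra.
  pose proof (Rabs_cos_le_1 (y + z)); pose proof (Rabs_cos_le_1 x).
  pose proof (Rabs_pos (sin (y + z))); pose proof (Rabs_pos (cos (y + z))).
  pose proof (Rabs_pos (cos x)); pose proof (Rabs_pos (cos y)); pose proof (Rabs_pos (cos z)).
  nra.
Qed.

Lemma sin_add3_defect_ge x y z : 0 <= sin x -> 0 <= sin y -> 0 <= sin z ->
  (sin y * sin z ^ 2 + sin z * sin y ^ 2) / 2 <=
  sin x + sin y + sin z - Rabs (sin (x + y + z)).
Proof.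
  intros hx hy hz. pose proof (Rabs_sin_add3_le x y z hx hy hz).
  pose proof (sin_sq_half_le_1_minus_Rabs_cos y).
  pose proof (sin_sq_half_le_1_minus_Rabs_cos z).
  nra.
Qed.

(* Averaging the previous bound over the three choices of the distinguished angle. *)
Lemma sin_add3_defect_bound x y z : 0 <= sin x -> 0 <= sin y -> 0 <= sin z ->
  (sin x + sin y) * (sin y + sin z) * (sin x + sin z) <=
  8 * (sin x + sin y + sin z - Rabs (sin (x + y + z))).
Proof.
  intros hx hy hz.
  pose proof (sin_add3_defect_ge x y z hx hy hz) as Ex.
  pose proof (sin_add3_defect_ge y x z hy hx hz) as Ey.
  pose proof (sin_add3_defect_ge z x y hz hx hy) as Ez.
  replace (y + x + z) with (x + y + z) in Ey by ring.
  replace (z + x + y) with (x + y + z) in Ez by ring.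
  set (a := sin x) in *; set (b := sin y) in *; set (c := sin z) in *.
  assert (0 <= a * (b - c) ^ 2) by (apply Rmult_le_pos; [lra | apply pow2_ge_0]).
  assert (0 <= b * (a - c) ^ 2) by (apply Rmult_le_pos; [lra | apply pow2_ge_0]).
  assert (0 <= c * (a - b) ^ 2) by (apply Rmult_le_pos; [lra | apply pow2_ge_0]).
  nra.
Qed.

Lemma prod_div_sq_le_of_defect a b u v :
  0 < a -> 0 < u -> 0 < v -> 0 <= b ->
  (a + u) * (u + v) * (a + v) <= 8 * (a - b + u + v) ->
  a * b * u * v / (a - b + u + v) ^ 2 <= 64 / (u + v) ^ 2.
Proof.
  intros ha hu hv hb hP.
  remember (a - b + u + v) as D eqn:HD.
  assert (0 < (a + u) * (u + v) * (a + v)) by (repeat apply Rmult_lt_0_compat; lra).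
  assert (hD : 0 < D) by lra.
  assert (h1 : a * b * u * v <= ((a + u) * (a + v)) ^ 2).
  { assert (a * b <= (a + u) * (a + v)) by nra.
    assert (u * v <= (a + u) * (a + v)) by nra.
    assert (0 < u * v) by nra. nra. }
  assert (h2 : ((a + u) * (u + v) * (a + v)) ^ 2 <= (8 * D) ^ 2).
  { apply pow_incr. split; [|exact hP]. repeat apply Rmult_le_pos; lra. }
  assert (0 < (u + v) ^ 2) by (apply pow_lt; lra).
  assert (0 < D ^ 2) by (apply pow_lt; lra).
  apply (Rmult_le_reg_r (D ^ 2 * (u + v) ^ 2)); [nra|].
  replace (a * b * u * v / D ^ 2 * (D ^ 2 * (u + v) ^ 2))
    with (a * b * u * v * (u + v) ^ 2) by (field; lra).
  replace (64 / (u + v) ^ 2 * (D ^ 2 * (u + v) ^ 2)) with (64 * D ^ 2) by (field; lra).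
  nra.
Qed.

Lemma Rabs_Rsgn_le_1 x : Rabs (Rsgn x) <= 1.
Proof.
  unfold Rsgn. destruct (Rlt_dec 0 x); [|destruct (Rlt_dec x 0)];
    unfold Rabs; destruct (Rcase_abs _); lra.
Qed.

Lemma omega_ge0 kappa m N k : 0 <= omega kappa m N k.
Proof.
  unfold omega. pose proof (sqrt_pos (kappa / m)).
  pose proof (Rabs_pos (sin (PI * IZR k / INR N))). nra.
Qed.

Lemma T_coef_sq_le kappa m N k1 k2 k3 k4 :
  T_coef kappa m N k1 k2 k3 k4 ^ 2 <= (3 / (4 * kappa ^ 2)) ^ 2 *
    (omega kappa m N k1 * omega kappa m N k2 * omega kappa m N k3 * omega kappa m N k4).
Proof.
  set (c := 3 / (4 * kappa ^ 2)).
  set (J := iota N (- k2 + k3 + k4) * iota N (- k2) * iota N k3 * iota N k4).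
  set (w := omega kappa m N).
  assert (hJ : J ^ 2 <= 1).
  { assert (hmul : forall x y, 0 <= x <= 1 -> 0 <= y <= 1 -> 0 <= x * y <= 1)
      by (intros; split; nra).
    assert (hi : forall x, 0 <= Rabs (iota N x) <= 1)
      by (intro x; split; [apply Rabs_pos | apply Rabs_Rsgn_le_1]).
    assert (0 <= Rabs J <= 1) by (unfold J; rewrite !Rabs_mult; repeat apply hmul; apply hi).
    rewrite <- pow2_abs. nra. }
  assert (E : T_coef kappa m N k1 k2 k3 k4 ^ 2 = c ^ 2 * J ^ 2 *
      (Rsqr (sqrt (w k1)) * Rsqr (sqrt (w k2)) * Rsqr (sqrt (w k3)) * Rsqr (sqrt (w k4)))).
  { unfold T_coef, J, w, c, Rsqr. ring. }
  rewrite E, !(Rsqr_sqrt (w _)) by apply omega_ge0.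
  assert (0 <= w k1 * w k2 * w k3 * w k4)
    by (repeat first [apply omega_ge0 | apply Rmult_le_pos]).
  assert (0 <= c ^ 2 * (w k1 * w k2 * w k3 * w k4))
    by (apply Rmult_le_pos; [apply pow2_ge_0 | lra]).
  nra.
Qed.

Lemma A2_sq_le kappa m N k1 k2 k3 k4 :
  Rabs (A2 kappa m N k1 k2 k3 k4) ^ 2 <= (3 / (4 * kappa ^ 2)) ^ 2 *
    (omega kappa m N k1 * omega kappa m N k2 * omega kappa m N k3 * omega kappa m N k4) /
    (omega kappa m N k1 - omega kappa m N k2 + omega kappa m N k3 + omega kappa m N k4) ^ 2.
Proof.
  rewrite pow2_abs. unfold A2, Rdiv. rewrite <- pow_inv.
  replace ((- T_coef kappa m N k1 k2 k3 k4 * / _) ^ 2)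
    with (T_coef kappa m N k1 k2 k3 k4 ^ 2 * (/ (omega kappa m N k1 - omega kappa m N k2 +
      omega kappa m N k3 + omega kappa m N k4)) ^ 2) by ring.
  apply Rmult_le_compat_r; [apply pow2_ge_0 | apply T_coef_sq_le].
Qed.

Definition theta (N : nat) (k : Z) : R := PI * IZR k / INR N.

Lemma omega_theta kappa m N k :
  omega kappa m N k = 2 * sqrt (kappa / m) * Rabs (sin (theta N k)).
Proof. reflexivity. Qed.

Lemma sin_theta_pos N k : (0 < k < Z.of_nat N)%Z -> 0 < sin (theta N k).
Proof.
  intros hk.
  assert (hkN : 0 < IZR k < INR N) by (rewrite INR_IZR_INZ; split; apply IZR_lt; lia).
  assert (E : theta N k * INR N = PI * IZR k) by (unfold theta; field; lra).
  pose proof PI_RGT_0. apply sin_gt_0; nra.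
Qed.

Lemma Rabs_sin_add_INR_mul_PI x n : Rabs (sin (x + INR n * PI)) = Rabs (sin x).
Proof.
  induction n as [|n IH]; [simpl; do 2 f_equal; ring|].
  rewrite S_INR, <- IH. replace (x + (INR n + 1) * PI) with (x + INR n * PI + PI) by ring.
  rewrite neg_sin, Rabs_Ropp. reflexivity.
Qed.

(* Resonance makes [theta N k1 + theta N k3 + theta N k4 - theta N k2] a multiple of PI. *)
Lemma Rabs_sin_theta_resonant N k1 k2 k3 k4 :
  (0 < k1 < Z.of_nat N)%Z -> (0 < k2 < Z.of_nat N)%Z ->
  (0 < k3 < Z.of_nat N)%Z -> (0 < k4 < Z.of_nat N)%Z ->
  ((k1 - k2 + k3 + k4) mod Z.of_nat N = 0)%Z ->
  Rabs (sin (theta N k2)) = Rabs (sin (theta N k1 + theta N k3 + theta N k4)).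
Proof.
  intros h1 h2 h3 h4 hres.
  apply Z.mod_divide in hres as [q hq]; [|lia].
  assert (hq0 : (0 <= q)%Z) by nia.
  assert (hN : 0 < INR N) by (apply lt_0_INR; lia).
  replace (theta N k1 + theta N k3 + theta N k4)
    with (theta N k2 + INR (Z.to_nat q) * PI).
  { symmetry. apply Rabs_sin_add_INR_mul_PI. }
  rewrite INR_IZR_INZ, Z2Nat.id by lia. unfold theta.
  replace (IZR k1) with (IZR k2 + IZR q * INR N - IZR k3 - IZR k4).
  { field. lra. }
  rewrite INR_IZR_INZ, <- mult_IZR, <- plus_IZR, <- !minus_IZR. f_equal. lia.
Qed.

Lemma A2_sq_le_resonant kappa m N k1 k2 k3 k4 : 0 < kappa -> 0 < m ->
  (0 < k1 < Z.of_nat N)%Z -> (0 < k2 < Z.of_nat N)%Z ->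
  (0 < k3 < Z.of_nat N)%Z -> (0 < k4 < Z.of_nat N)%Z ->
  ((k1 - k2 + k3 + k4) mod Z.of_nat N = 0)%Z ->
  Rabs (A2 kappa m N k1 k2 k3 k4) ^ 2 <=
  (3 / (4 * kappa ^ 2)) ^ 2 * (2 * sqrt (kappa / m)) ^ 2 * 64 /
    (sin (theta N k3) + sin (theta N k4)) ^ 2.
Proof.
  intros hk hm h1 h2 h3 h4 hres.
  pose proof (A2_sq_le kappa m N k1 k2 k3 k4) as HA.
  rewrite !omega_theta, (Rabs_sin_theta_resonant N k1 k2 k3 k4 h1 h2 h3 h4 hres) in HA.
  pose proof (sin_theta_pos N k1 h1); pose proof (sin_theta_pos N k3 h3);
    pose proof (sin_theta_pos N k4 h4).
  pose proof (sin_add3_defect_bound (theta N k1) (theta N k3) (theta N k4)) as HT.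
  rewrite !(Rabs_right (sin (theta N _))) in HA by lra.
  set (c := 3 / (4 * kappa ^ 2)) in *. set (s := 2 * sqrt (kappa / m)) in *.
  set (a := sin (theta N k1)) in *. set (u := sin (theta N k3)) in *.
  set (v := sin (theta N k4)) in *.
  set (b := Rabs (sin (theta N k1 + theta N k3 + theta N k4))) in *.
  assert (hs : 0 < s) by (unfold s; pose proof (sqrt_lt_R0 _ (Rdiv_lt_0_compat _ _ hk hm)); lra).
  assert (hb : 0 <= b) by apply Rabs_pos.
  specialize (HT ltac:(lra) ltac:(lra) ltac:(lra)).
  replace (a + u + v - b) with (a - b + u + v) in HT by ring.
  assert (0 < (a + u) * (u + v) * (a + v)) by (repeat apply Rmult_lt_0_compat; lra).
  eapply Rle_trans; [exact HA|].
  replace (c ^ 2 * (s * a * (s * b) * (s * u) * (s * v)) / (s * a - s * b + s * u + s * v) ^ 2)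
    with (c ^ 2 * s ^ 2 * (a * b * u * v / (a - b + u + v) ^ 2))
    by (field; assert (0 < a - b + u + v) by lra; split; nra).
  replace (c ^ 2 * s ^ 2 * 64 / (u + v) ^ 2) with (c ^ 2 * s ^ 2 * (64 / (u + v) ^ 2))
    by (field; lra).
  apply Rmult_le_compat_l; [apply Rmult_le_pos; apply pow2_ge_0|].
  apply prod_div_sq_le_of_defect; lra.
Qed.

(* Via the degree-7 Taylor lower bound [sin_lb] of Stdlib. *)
Lemma sin_ge_quarter x : 0 <= x -> x <= PI / 2 -> x / 4 <= sin x.
Proof.
  intros h0 h1. pose proof PI_4.
  destruct (SIN x h0 ltac:(lra)) as [HS _].
  assert (E : sin_lb x = x * (1 - x ^ 2 / 6 + x ^ 4 * (1 / 120 - x ^ 2 / 5040)))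
    by (unfold sin_lb, sin_approx, sin_term; simpl; field).
  assert (x ^ 2 <= 4) by nra.
  assert (0 <= x ^ 4 * (1 / 120 - x ^ 2 / 5040)) by (apply Rmult_le_pos; [apply pow_le|]; lra).
  nra.
Qed.

Lemma IZR_of_nat_S i : IZR (Z.of_nat (S i)) = INR i + 1.
Proof. rewrite <- INR_IZR_INZ, S_INR. reflexivity. Qed.

Lemma quarter_le_sin_theta N j : 2 * (INR j + 1) <= INR N ->
  PI / (4 * INR N) * (INR j + 1) <= sin (theta N (Z.of_nat (S j))).
Proof.
  intros hj. pose proof (pos_INR j). pose proof PI_RGT_0.
  assert (E : theta N (Z.of_nat (S j)) * INR N = PI * (INR j + 1))
    by (unfold theta; rewrite IZR_of_nat_S; field; lra).
  replace (PI / (4 * INR N) * (INR j + 1)) with (theta N (Z.of_nat (S j)) / 4)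
    by (unfold theta; rewrite IZR_of_nat_S; field; lra).
  apply sin_ge_quarter; nra.
Qed.

Lemma INR_sub_sub_2 N i : (i + 2 <= N)%nat -> INR (N - 2 - i) = INR N - 2 - INR i.
Proof. intros hi. rewrite !minus_INR by lia. simpl. ring. Qed.

(* [theta N (N - k) = PI - theta N k]: small sines come from k near 0 or near N. *)
Lemma sin_theta_lower N i : (2 <= N)%nat -> (i <= N - 2)%nat ->
  PI / (4 * INR N) * (INR i + 1) <= sin (theta N (Z.of_nat (S i))) \/
  PI / (4 * INR N) * (INR (N - 2 - i) + 1) <= sin (theta N (Z.of_nat (S i))).
Proof.
  intros HN hi.
  destruct (le_lt_dec (2 * S i) N) as [h|h]; [left | right].
  - apply quarter_le_sin_theta.
    apply le_INR in h. rewrite mult_INR, (S_INR i) in h. simpl (INR 2) in h. lra.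
  - replace (sin (theta N (Z.of_nat (S i)))) with (sin (theta N (Z.of_nat (S (N - 2 - i))))).
    + apply quarter_le_sin_theta.
      assert (h' : (2 * S (N - 2 - i) <= N)%nat) by lia.
      apply le_INR in h'. rewrite mult_INR, (S_INR (N - 2 - i)) in h'. simpl (INR 2) in h'. lra.
    + assert (0 < INR N) by (apply lt_0_INR; lia).
      rewrite <- sin_PI_x. f_equal. unfold theta.
      rewrite !IZR_of_nat_S, INR_sub_sub_2 by lia. field. lra.
Qed.

Lemma inv_sq_sum_le c p q s t : c * p <= s -> c * q <= t -> 0 < c -> 0 < p -> 0 < q ->
  / (s + t) ^ 2 <= / c ^ 2 * / (p + q) ^ 2.
Proof.
  intros hs ht hc hp hq.
  assert (0 < c * (p + q)) by (apply Rmult_lt_0_compat; lra).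
  rewrite <- Rinv_mult, <- Rpow_mult_distr.
  apply Rinv_le_contravar; [apply pow_lt; lra | apply pow_incr; lra].
Qed.

Definition pair_weight (i j : nat) : R := / (INR i + 1 + (INR j + 1)) ^ 2.

Definition reflected_weight (n i j : nat) : R :=
  pair_weight i j + pair_weight i (n - j) + pair_weight (n - i) j +
  pair_weight (n - i) (n - j).

Lemma pair_weight_ge0 i j : 0 <= pair_weight i j.
Proof.
  unfold pair_weight. pose proof (pos_INR i); pose proof (pos_INR j).
  apply Rlt_le, Rinv_0_lt_compat, pow_lt. lra.
Qed.

Lemma reflected_weight_ge0 n i j : 0 <= reflected_weight n i j.
Proof.
  unfold reflected_weight.
  pose proof (pair_weight_ge0 i j); pose proof (pair_weight_ge0 i (n - j));
    pose proof (pair_weight_ge0 (n - i) j); pose proof (pair_weight_ge0 (n - i) (n - j)).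
  lra.
Qed.

Lemma inv_sq_sin_theta_sum_le N i j : (2 <= N)%nat -> (i <= N - 2)%nat -> (j <= N - 2)%nat ->
  / (sin (theta N (Z.of_nat (S i))) + sin (theta N (Z.of_nat (S j)))) ^ 2 <=
  (4 * INR N / PI) ^ 2 * reflected_weight (N - 2) i j.
Proof.
  intros HN hi hj.
  assert (0 < INR N) by (apply lt_0_INR; lia). pose proof PI_RGT_0.
  assert (hc : 0 < PI / (4 * INR N)) by (apply Rdiv_lt_0_compat; lra).
  replace (4 * INR N / PI) with (/ (PI / (4 * INR N))) by (field; lra).
  rewrite pow_inv.
  assert (hcw : 0 <= / (PI / (4 * INR N)) ^ 2) by (apply Rlt_le, Rinv_0_lt_compat, pow_lt; lra).
  pose proof (pos_INR i); pose proof (pos_INR j);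
    pose proof (pos_INR (N - 2 - i)); pose proof (pos_INR (N - 2 - j)).
  pose proof (pair_weight_ge0 i j); pose proof (pair_weight_ge0 i (N - 2 - j));
    pose proof (pair_weight_ge0 (N - 2 - i) j);
    pose proof (pair_weight_ge0 (N - 2 - i) (N - 2 - j)).
  destruct (sin_theta_lower N i HN hi) as [si|si];
    destruct (sin_theta_lower N j HN hj) as [sj|sj];
    (eapply Rle_trans;
      [apply (inv_sq_sum_le _ _ _ _ _ si sj); lra |];
     apply Rmult_le_compat_l; [exact hcw |];
     unfold reflected_weight, pair_weight in *; lra).
Qed.

Lemma sum_f_R0_swap (f : nat -> nat -> R) n m :
  sum_f_R0 (fun i => sum_f_R0 (fun j => f i j) m) n =
  sum_f_R0 (fun j => sum_f_R0 (fun i => f i j) n) m.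
Proof.
  induction n as [|n IH]; [reflexivity|].
  rewrite tech5, IH, <- sum_plus. apply sum_eq. intros. rewrite tech5. reflexivity.
Qed.

Lemma sum_f_R0_reflect (f : nat -> R) n :
  sum_f_R0 (fun i => f (n - i)%nat) n = sum_f_R0 f n.
Proof.
  induction n as [|n IH]; [reflexivity|].
  rewrite decomp_sum by lia. simpl pred. rewrite tech5, <- IH.
  rewrite Nat.sub_0_r. simpl (S n - S _)%nat. ring.
Qed.

Lemma sum_f_R0_if_unique_le (P : nat -> bool) c n : 0 <= c ->
  (forall i i', (i <= n)%nat -> (i' <= n)%nat -> P i = true -> P i' = true -> i = i') ->
  sum_f_R0 (fun i => if P i then c else 0) n <= c.
Proof.
  intros hc. induction n as [|n IH]; intros H.
  - simpl. destruct (P 0%nat); lra.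
  - rewrite tech5. destruct (P (S n)) eqn:E.
    + rewrite sum_eq_R0; [lra|].
      intros i hi. destruct (P i) eqn:Ei; [|reflexivity].
      assert (i = S n) by (apply H; auto). lia.
    + rewrite Rplus_0_r. apply IH. intros. apply H; auto.
Qed.

Lemma sum3_if_unique_le (P : nat -> nat -> nat -> bool) (F : nat -> nat -> R) n :
  (forall j k, 0 <= F j k) ->
  (forall i i' j k, (i <= n)%nat -> (i' <= n)%nat ->
     P i j k = true -> P i' j k = true -> i = i') ->
  sum_f_R0 (fun i => sum_f_R0 (fun j => sum_f_R0 (fun k =>
    if P i j k then F j k else 0) n) n) n <=
  sum_f_R0 (fun j => sum_f_R0 (fun k => F j k) n) n.
Proof.
  intros hF huniq.
  rewrite (sum_f_R0_swap (fun i j => sum_f_R0 (fun k => if P i j k then F j k else 0) n)).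
  apply sum_Rle. intros j _.
  rewrite (sum_f_R0_swap (fun i k => if P i j k then F j k else 0)).
  apply sum_Rle. intros k _.
  apply sum_f_R0_if_unique_le; [apply hF|]. eauto.
Qed.

Lemma sum_inv_sq_shift_le p n : 0 < p ->
  sum_f_R0 (fun j => / (p + (INR j + 1)) ^ 2) n <= / p - / (p + (INR n + 1)).
Proof.
  intros hp.
  assert (step : forall y, 0 < y -> / (y + 1) ^ 2 <= / y - / (y + 1)).
  { intros y hy. replace (/ y - / (y + 1)) with (/ (y * (y + 1))) by (field; lra).
    apply Rinv_le_contravar; [apply Rmult_lt_0_compat|]; nra. }
  induction n as [|n IH].
  - simpl. replace (p + (0 + 1)) with (p + 1) by ring. exact (step p hp).
  - rewrite tech5, S_INR. pose proof (pos_INR n).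
    pose proof (step (p + (INR n + 1)) ltac:(lra)).
    replace (p + (INR n + 1 + 1)) with (p + (INR n + 1) + 1) by ring. lra.
Qed.

Lemma ln_le_sub_1 y : 0 < y -> ln y <= y - 1.
Proof. intros hy. pose proof (exp_ineq1_le (ln y)) as H. rewrite exp_ln in H by exact hy. lra. Qed.

Lemma inv_succ_le_ln_diff x : 0 < x -> / (x + 1) <= ln (x + 1) - ln x.
Proof.
  intros hx.
  pose proof (ln_le_sub_1 (x / (x + 1)) ltac:(apply Rdiv_lt_0_compat; lra)) as Hln.
  unfold Rdiv in Hln. rewrite ln_mult, ln_Rinv in Hln by (try apply Rinv_0_lt_compat; lra).
  replace (x * / (x + 1) - 1) with (- / (x + 1)) in Hln by (field; lra). lra.
Qed.

Lemma harmonic_le_ln n : sum_f_R0 (fun i => / (INR i + 1)) n <= 1 + ln (INR n + 1).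
Proof.
  induction n as [|n IH].
  - simpl. rewrite Rplus_0_l, Rinv_1, ln_1. lra.
  - rewrite tech5, S_INR. pose proof (pos_INR n).
    pose proof (inv_succ_le_ln_diff (INR n + 1) ltac:(lra)). lra.
Qed.

Lemma sum_pair_weight_le n :
  sum_f_R0 (fun i => sum_f_R0 (fun j => pair_weight i j) n) n <= 1 + ln (INR n + 1).
Proof.
  eapply Rle_trans; [|apply harmonic_le_ln].
  apply sum_Rle. intros i _. pose proof (pos_INR i); pose proof (pos_INR n).
  pose proof (sum_inv_sq_shift_le (INR i + 1) n ltac:(lra)).
  assert (0 <= / (INR i + 1 + (INR n + 1))) by (apply Rlt_le, Rinv_0_lt_compat; lra).
  unfold pair_weight. lra.
Qed.

Lemma sum_reflected_weight n :
  sum_f_R0 (fun i => sum_f_R0 (fun j => reflected_weight n i j) n) n =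
  4 * sum_f_R0 (fun i => sum_f_R0 (fun j => pair_weight i j) n) n.
Proof.
  set (W := sum_f_R0 (fun i => sum_f_R0 (fun j => pair_weight i j) n) n).
  assert (Hj : forall g : nat -> nat, sum_f_R0 (fun i =>
      sum_f_R0 (fun j => pair_weight (g i) (n - j)) n) n =
      sum_f_R0 (fun i => sum_f_R0 (fun j => pair_weight (g i) j) n) n).
  { intros g. apply sum_eq. intros i _.
    exact (sum_f_R0_reflect (fun j => pair_weight (g i) j) n). }
  assert (Hi : sum_f_R0 (fun i => sum_f_R0 (fun j => pair_weight (n - i) j) n) n = W)
    by exact (sum_f_R0_reflect (fun i => sum_f_R0 (fun j => pair_weight i j) n) n).
  unfold reflected_weight.
  rewrite <- (sum_eq (fun i => sum_f_R0 (fun j => pair_weight i j) n +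
      sum_f_R0 (fun j => pair_weight i (n - j)) n +
      sum_f_R0 (fun j => pair_weight (n - i) j) n +
      sum_f_R0 (fun j => pair_weight (n - i) (n - j)) n))
    by (intros; rewrite <- !sum_plus; reflexivity).
  rewrite !sum_plus, (Hj (fun i => i)), (Hj (fun i => n - i)%nat), Hi. unfold W. ring.
Qed.

(* As in [resonance_sum], the summation index [i] stands for the wave number [S i]. *)
Definition resonant (N : nat) (k1 : Z) (i2 i3 i4 : nat) : bool :=
  Z.eqb ((k1 - Z.of_nat (S i2) + Z.of_nat (S i3) + Z.of_nat (S i4)) mod Z.of_nat N) 0.

Lemma resonant_unique N k1 i i' j k : (2 <= N)%nat ->
  (i <= N - 2)%nat -> (i' <= N - 2)%nat ->
  resonant N k1 i j k = true -> resonant N k1 i' j k = true -> i = i'.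
Proof.
  unfold resonant. intros HN hi hi' E E'.
  apply Z.eqb_eq, Z.mod_divide in E as [q hq]; [|lia].
  apply Z.eqb_eq, Z.mod_divide in E' as [q' hq']; [|lia].
  assert (Z.of_nat i' - Z.of_nat i = (q - q') * Z.of_nat N)%Z by lia.
  assert (q = q') by nia. subst q'. lia.
Qed.

Lemma resonance_term_le kappa m N k1 i2 i3 i4 : 0 < kappa -> 0 < m -> (2 <= N)%nat ->
  (0 < k1 < Z.of_nat N)%Z ->
  (i2 <= N - 2)%nat -> (i3 <= N - 2)%nat -> (i4 <= N - 2)%nat -> resonant N k1 i2 i3 i4 = true ->
  Rabs (A2 kappa m N k1 (Z.of_nat (S i2)) (Z.of_nat (S i3)) (Z.of_nat (S i4))) ^ 2 <=
  (3 / (4 * kappa ^ 2)) ^ 2 * (2 * sqrt (kappa / m)) ^ 2 * 64 * (4 * INR N / PI) ^ 2 *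
    reflected_weight (N - 2) i3 i4.
Proof.
  intros hk hm HN hk1 hi2 hi3 hi4 hres.
  apply Z.eqb_eq in hres.
  eapply Rle_trans; [apply A2_sq_le_resonant; auto; lia|].
  set (K := (3 / (4 * kappa ^ 2)) ^ 2 * (2 * sqrt (kappa / m)) ^ 2 * 64).
  unfold Rdiv at 1. rewrite Rmult_assoc.
  apply Rmult_le_compat_l.
  { apply Rmult_le_pos; [apply Rmult_le_pos; apply pow2_ge_0 | lra]. }
  apply inv_sq_sin_theta_sum_le; assumption.
Qed.

Lemma resonance_sum_le kappa m N k1 : 0 < kappa -> 0 < m -> (2 <= N)%nat ->
  (0 < k1 < Z.of_nat N)%Z ->
  resonance_sum kappa m N k1 <=
  (3 / (4 * kappa ^ 2)) ^ 2 * (2 * sqrt (kappa / m)) ^ 2 * 64 * (4 * INR N / PI) ^ 2 *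
    (4 * (1 + ln (INR N))).
Proof.
  intros hk hm HN hk1.
  set (K := (3 / (4 * kappa ^ 2)) ^ 2 * (2 * sqrt (kappa / m)) ^ 2 * 64 * (4 * INR N / PI) ^ 2).
  assert (hK : 0 <= K)
    by (apply Rmult_le_pos; [apply Rmult_le_pos; [apply Rmult_le_pos|]; try apply pow2_ge_0; lra
                            | apply pow2_ge_0]).
  apply Rle_trans with (sum_f_R0 (fun i2 => sum_f_R0 (fun i3 => sum_f_R0 (fun i4 =>
    if resonant N k1 i2 i3 i4 then K * reflected_weight (N - 2) i3 i4 else 0)
      (N - 2)) (N - 2)) (N - 2)).
  { apply sum_Rle; intros i2 hi2; apply sum_Rle; intros i3 hi3; apply sum_Rle; intros i4 hi4.
    cbv zeta. fold (resonant N k1 i2 i3 i4).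
    destruct (resonant N k1 i2 i3 i4) eqn:hres; [|lra].
    apply resonance_term_le; assumption. }
  eapply Rle_trans.
  { apply sum3_if_unique_le.
    - intros j k. apply Rmult_le_pos; [exact hK | apply reflected_weight_ge0].
    - intros i i' j k. apply resonant_unique. exact HN. }
  rewrite (sum_eq _ (fun i => sum_f_R0 (fun j => reflected_weight (N - 2) i j) (N - 2) * K))
    by (intros; rewrite Rmult_comm, scal_sum; apply sum_eq; intros; ring).
  rewrite <- scal_sum, sum_reflected_weight.
  apply Rmult_le_compat_l; [exact hK|].
  assert (INR (N - 2) + 1 < INR N) by (rewrite minus_INR by lia; simpl (INR 2); lra).
  assert (ln (INR (N - 2) + 1) <= ln (INR N))
    by (apply Rlt_le, ln_increasing; [pose proof (pos_INR (N - 2)) |]; lra).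
  pose proof (sum_pair_weight_le (N - 2)). lra.
Qed.

Lemma one_plus_ln_le x : 2 <= x -> 1 + ln x <= (1 + / ln 2) * ln x.
Proof.
  intros hx.
  assert (h2 : 0 < ln 2) by (pose proof ln_lt_2; lra).
  assert (ln 2 <= ln x).
  { destruct (Req_dec x 2) as [-> | ne]; [lra|]. apply Rlt_le, ln_increasing; lra. }
  assert (1 <= ln x * / ln 2).
  { apply (Rmult_le_reg_r (ln 2)); [exact h2|].
    rewrite Rmult_assoc, Rinv_l by lra. lra. }
  lra.
Qed.

Theorem mainTheorem3 :
  forall kappa m : R, 0 < kappa -> 0 < m ->
  exists C : R, 0 < C /\
    forall (N : nat) (k1 : Z), (2 <= N)%nat ->
      (0 < k1)%Z -> (k1 < Z.of_nat N)%Z ->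
      resonance_sum kappa m N k1 <= C * (INR N) ^ 2 * ln (INR N).
Proof.
  intros kappa m hk hm.
  set (K := (3 / (4 * kappa ^ 2)) ^ 2 * (2 * sqrt (kappa / m)) ^ 2 * 64).
  assert (hK : 0 < K).
  { pose proof (sqrt_lt_R0 _ (Rdiv_lt_0_compat _ _ hk hm)).
    assert (0 < 3 / (4 * kappa ^ 2))
      by (apply Rdiv_lt_0_compat; [|apply Rmult_lt_0_compat; [|apply pow_lt]]; lra).
    unfold K. apply Rmult_lt_0_compat; [apply Rmult_lt_0_compat; apply pow_lt|]; lra. }
  pose proof PI_RGT_0.
  assert (0 < ln 2) by (pose proof ln_lt_2; lra).
  assert (0 < / ln 2) by (apply Rinv_0_lt_compat; lra).
  exists (K * (4 / PI) ^ 2 * 4 * (1 + / ln 2)). split.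
  { apply Rmult_lt_0_compat; [apply Rmult_lt_0_compat; [apply Rmult_lt_0_compat|]|]; try lra.
    apply pow_lt, Rdiv_lt_0_compat; lra. }
  intros N k1 HN hk1 hk1'.
  assert (hN : 2 <= INR N) by (apply (le_INR 2); lia).
  eapply Rle_trans; [apply resonance_sum_le; auto|].
  fold K.
  pose proof (one_plus_ln_le (INR N) hN).
  assert (0 <= K * (4 * INR N / PI) ^ 2 * 4) by
    (apply Rmult_le_pos; [apply Rmult_le_pos; [lra | apply pow2_ge_0] | lra]).
  replace (K * (4 / PI) ^ 2 * 4 * (1 + / ln 2) * INR N ^ 2 * ln (INR N))
    with (K * (4 * INR N / PI) ^ 2 * 4 * ((1 + / ln 2) * ln (INR N))) by (field; lra).
  replace (K * (4 * INR N / PI) ^ 2 * (4 * (1 + ln (INR N))))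
    with (K * (4 * INR N / PI) ^ 2 * 4 * (1 + ln (INR N))) by ring.
  apply Rmult_le_compat_l; assumption.
Qed.
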